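(* For the opinion--action model described in the context with $\phi\in(0,1)$ and any initial values, there exists a constant $\alpha>0$ such that for all $i,j\in\{1,\dots,2n\}$ and all $t\ge1$, if $p_{ij}(t)>0$ then $p_{ij}(t)\ge\alpha$, where $p_{ij}(t)$ denotes the $(i,j)$ entry of $P(t)$.
   Context: Fix an integer $n\ge 1$, $\mathcal{V}=\{1,\dots,n\}$, $\epsilon\in[0,1]$ and $\phi\in[0,1]$. Opinions $x_i(t)$ and actions $y_i(t)$ evolve for $t\in\mathbb{Z}_{\ge0}$ by: $\mathcal{N}_i(t)=\{j\in\mathcal{V}\mid j\neq i,\ |x_i(t)-y_j(t)|\le\epsilon\}$; $x_i(t+1)=\frac{x_i(t)+\sum_{j\in\mathcal{N}_i(t)}y_j(t)}{|\mathcal{N}_i(t)|+1}$; $y_i(t+1)=\phi\,x_i(t+1)+\frac{1-\phi}{n}\sum_{k=1}^n y_k(t)$, with initial values in $[0,1]$. For $t\ge1$, $P(t)=\begin{bmatrix}P_{11}(t)&P_{12}(t)\\ P_{21}&P_{22}\end{bmatrix}\in\mathbb{R}^{2n\times2n}$ with $n\times n$ blocks $[P_{11}(t)]_{ij}=\frac{1}{|\mathcal{N}_i(t)|+1}$ if $j=i$, $\frac{\phi}{|\mathcal{N}_i(t)|+1}$ if $j\in\mathcal{N}_i(t)$, $0$ otherwise; $[P_{12}(t)]_{ij}=\frac{(1-\phi)|\mathcal{N}_i(t)|}{(|\mathcal{N}_i(t)|+1)n}$ for all $i,j$; $P_{21}=\phi I_n$; $P_{22}=\frac{1-\phi}{n}\mathbf{1}_n\mathbf{1}_n^\top$.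 *)

From HB Require Import structures.
From mathcomp Require Import all_boot all_order all_algebra.
Set Implicit Arguments. Unset Strict Implicit. Unset Printing Implicit Defensive.
Import Order.TTheory GRing.Theory Num.Theory.
Local Open Scope ring_scope.

Section OpinionAction.
Variables (R : realFieldType) (n : nat) (eps phi : R).

(* A state of the model: opinions x and actions y of the n agents. *)
Definition state := (('I_n -> R) * ('I_n -> R))%type.

Definition nbrs (s : state) (i : 'I_n) : {set 'I_n} :=
  [set j : 'I_n | (j != i) && (`|s.1 i - s.2 j| <= eps)].

Definition step (s : state) : state :=
  let xn := fun i : 'I_n =>
    (s.1 i + \sum_(j in nbrs s i) s.2 j) / (#|nbrs s i|%:R + 1) in
  (xn, fun i : 'I_n => phi * xn i + (1 - phi) / n%:R * \sum_(k < n) s.2 k).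

Fixpoint traj (x0 y0 : 'I_n -> R) (t : nat) : state :=
  match t with
  | 0 => (x0, y0)
  | t'.+1 => step (traj x0 y0 t')
  end.

Definition Nbr (x0 y0 : 'I_n -> R) (t : nat) (i : 'I_n) : {set 'I_n} :=
  nbrs (traj x0 y0 t) i.

Definition P11 x0 y0 t : 'M[R]_n :=
  \matrix_(i, j)
    (if j == i then 1 / (#|Nbr x0 y0 t i|%:R + 1)
     else if j \in Nbr x0 y0 t i then phi / (#|Nbr x0 y0 t i|%:R + 1)
     else 0).

Definition P12 x0 y0 t : 'M[R]_n :=
  \matrix_(i, j)
    ((1 - phi) * #|Nbr x0 y0 t i|%:R / ((#|Nbr x0 y0 t i|%:R + 1) * n%:R)).

Definition P21 : 'M[R]_n := phi%:M.

Definition P22 : 'M[R]_n := \matrix_(i, j) ((1 - phi) / n%:R).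

Definition Pmat x0 y0 t : 'M[R]_(n + n) :=
  block_mx (P11 x0 y0 t) (P12 x0 y0 t) P21 P22.

End OpinionAction.

From HB Require Import structures.
From mathcomp Require Import all_boot all_order all_algebra.
From mathcomp Require Import ring lra.
Import Order.TTheory GRing.Theory Num.Theory.
Local Open Scope ring_scope.

(* The entries of P(t) are built from phi, 1 - phi, n and the degree
   k = |N_i(t)| <= n, so they take finitely many shapes, each bounded below
   independently of t.  The entries of P11 and P21 that can be positive are at
   least phi / (n + 1).  Those of P12 and P22 are at least (1 - phi) / (2 n):
   an entry of P12 is positive only when k >= 1, and then k / (k + 1) >= 1 / 2. *)

Lemma ler_div_succ (R : realFieldType) (a b k m : R) :
  0 <= a <= b -> 0 <= k <= m -> a / (m + 1) <= b / (k + 1).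
Proof.
move=> /andP[a0 ab] /andP[k0 km].
have k1 : 0 < k + 1 by lra.
apply: (@le_trans _ _ (a / (k + 1))).
  by rewrite ler_wpM2l // lef_pV2 ?posrE ?lerD2r //; lra.
by rewrite ler_wpM2r // invr_ge0 ltW.
Qed.

Lemma ler_half_div_succ (R : realFieldType) (c k m : R) :
  0 <= c -> 1 <= k -> 0 < m -> c / (2 * m) <= c * k / ((k + 1) * m).
Proof.
move=> c0 k1 m0.
have km0 : 0 < (k + 1) * m by apply: mulr_gt0; lra.
rewrite ler_pdivlMr // mulrAC ler_pdivrMr; last lra.
rewrite -subr_ge0.
have -> : c * k * (2 * m) - c * ((k + 1) * m) = c * m * (k - 1) by ring.
by apply: mulr_ge0; [apply: mulr_ge0|]; lra.
Qed.

Lemma card_ord_set_bounds (R : realFieldType) (n : nat) (S : {set 'I_n}) :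
  0 <= (#|S|%:R : R) <= n%:R.
Proof. by rewrite ler0n ler_nat -[X in (_ <= X)%N]card_ord max_card. Qed.

Section PositiveEntries.
Variables (R : realFieldType) (n : nat) (eps phi : R) (x0 y0 : 'I_n -> R).
Hypothesis n_gt0 : (0 < n)%N.
Hypotheses (phi_gt0 : 0 < phi) (phi_lt1 : phi < 1).

Local Notation N := (n%:R : R).

Let N_gt0 : 0 < N. Proof. by rewrite ltr0n. Qed.

Definition entry_bound : R := Num.min (phi / (N + 1)) ((1 - phi) / (2 * N)).

Lemma entry_bound_gt0 : 0 < entry_bound.
Proof.
rewrite lt_min; apply/andP; split; apply: divr_gt0;
  by rewrite ?subr_gt0 ?addr_gt0 ?mulr_gt0.
Qed.

Lemma P11_pos_ge t i j :
  0 < P11 eps phi x0 y0 t i j -> phi / (N + 1) <= P11 eps phi x0 y0 t i j.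
Proof.
have kN := card_ord_set_bounds R _ (Nbr eps phi x0 y0 t i).
have phi01 : 0 <= phi <= 1 by rewrite ltW // ltW.
have phi_phi : 0 <= phi <= phi by rewrite ltW // lexx.
rewrite mxE; case: (j == i); first by move=> _; apply: ler_div_succ.
by case: (j \in _); rewrite ?ltxx // => _; apply: ler_div_succ.
Qed.

Lemma P12_pos_ge t i j :
  0 < P12 eps phi x0 y0 t i j -> (1 - phi) / (2 * N) <= P12 eps phi x0 y0 t i j.
Proof.
rewrite mxE; have [->|k_gt0 _] := posnP #|Nbr eps phi x0 y0 t i|.
  by rewrite mulr0 mul0r ltxx.
by apply: ler_half_div_succ => //; [rewrite subr_ge0 ltW | rewrite ler1n].
Qed.

Lemma P21_pos_ge i j : 0 < P21 n phi i j -> phi / (N + 1) <= P21 n phi i j.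
Proof.
rewrite mxE; case: eqP => _; last by rewrite mulr0n ltxx.
rewrite mulr1n => _; rewrite ler_pdivrMr ?addr_gt0 //.
by rewrite ler_peMr ?(ltW phi_gt0) // lerDr ler0n.
Qed.

Lemma P22_ge i j : (1 - phi) / (2 * N) <= P22 n phi i j.
Proof.
rewrite mxE; apply: ler_wpM2l; first by rewrite subr_ge0 ltW.
by rewrite lef_pV2 ?posrE ?mulr_gt0 // ler_pMl // ler1n.
Qed.

Lemma Pmat_pos_ge t i j :
  0 < Pmat eps phi x0 y0 t i j -> entry_bound <= Pmat eps phi x0 y0 t i j.
Proof.
rewrite /entry_bound -(splitK i) -(splitK j).
case: (split i) => a; case: (split j) => b /=.
- by rewrite block_mxEul ge_min => /P11_pos_ge ->.
- by rewrite block_mxEur ge_min => /P12_pos_ge ->; rewrite orbT.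
- by rewrite block_mxEdl ge_min => /P21_pos_ge ->.
- by rewrite block_mxEdr ge_min P22_ge orbT.
Qed.

End PositiveEntries.

Theorem lemma2 (R : realFieldType) (n : nat) (eps phi : R) (x0 y0 : 'I_n -> R) :
  (1 <= n)%N ->
  0 <= eps <= 1 ->
  0 < phi < 1 ->
  (forall i, 0 <= x0 i <= 1) ->
  (forall i, 0 <= y0 i <= 1) ->
  exists alpha : R, 0 < alpha /\
    forall (t : nat) (i j : 'I_(n + n)), (1 <= t)%N ->
      0 < Pmat eps phi x0 y0 t i j -> alpha <= Pmat eps phi x0 y0 t i j.
Proof.
move=> n_gt0 _ /andP[phi_gt0 phi_lt1] _ _.
exists (entry_bound R n phi); split; first exact: entry_bound_gt0.
by move=> t i j _; apply: Pmat_pos_ge.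
Qed.
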